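(* For every integer $s\ge3$, $F_{s,4}(x)=\frac{1}{(s-1)!}\bigl(x^2-(6s-1)x+6s^2\bigr)\prod_{p=4}^{s}(x-p)$ (an empty product equals $1$).
   Context: For an integer $j\ge0$, $\binom{x}{j}=x(x-1)\cdots(x-j+1)/j!$ as a polynomial in $x$, and $\binom{x}{j}=0$ for $j<0$. For integers $s\ge1$, $k\ge1$, the Moser polynomial is $F_{s,k}(x)=\sum_{p=1}^{s}(-1)^{p-1}p^{k-1}\binom{x}{s-p}$. *)

From HB Require Import structures.
From mathcomp Require Import all_boot all_order all_algebra.
Set Implicit Arguments. Unset Strict Implicit. Unset Printing Implicit Defensive.
Import Order.TTheory GRing.Theory Num.Theory.
Local Open Scope ring_scope.

Definition binomPoly (j : nat) : {poly rat} :=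
  (j`!%:R)^-1 *: \prod_(i < j) ('X - (i%:R)%:P).

Definition binomPolyZ (j : int) : {poly rat} :=
  match j with
  | Posz n => binomPoly n
  | Negz _ => 0
  end.

(* Moser polynomial F_{s,k}(x) = sum_{p=1}^{s} (-1)^(p-1) p^(k-1) binom(x, s-p) *)
Definition moserPoly (s k : nat) : {poly rat} :=
  \sum_(1 <= p < s.+1)
     ((-1) ^+ (p.-1) * (p%:R) ^+ (k.-1)) *: binomPolyZ (s%:Z - p%:Z).

From HB Require Import structures.
From mathcomp Require Import all_boot all_order all_algebra.
From mathcomp Require Import ring.
Import Order.TTheory GRing.Theory Num.Theory.
Local Open Scope ring_scope.

(* Both sides are polynomials, so it suffices to compare them at every
   natural number n. There F_{s,k}(n) = sum_p (-1)^(p-1) p^(k-1) C(n, s-p),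
   which by Pascal's rule satisfies V(n+1, s+1) = V(n, s+1) + V(n, s), with
   V(0, s) = (-1)^(s-1) s^(k-1). For k = 4 the claimed closed form obeys the
   same recurrence and the same boundary values at n = 0 and at s = 3, so the
   two agree by induction on n. *)

Lemma poly_eq_on_nat (R : numDomainType) (p q : {poly R}) :
  (forall n : nat, p.[n%:R] = q.[n%:R]) -> p = q.
Proof.
move=> epq; apply/eqP; rewrite -subr_eq0; apply/eqP.
apply: (@roots_geq_poly_eq0 _ _ [seq i%:R | i <- iota 0 (size (p - q))]).
- by apply/allP => x /mapP [i _ ->]; rewrite /root hornerD hornerN epq subrr.
- by rewrite map_inj_uniq ?iota_uniq // => a b /eqP; rewrite eqr_nat => /eqP.
- by rewrite size_map size_iota.
Qed.

Lemma prod_natrB_bin (n j : nat) :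
  \prod_(i < j) ((n%:R : rat) - i%:R) = ('C(n, j) * j`!)%:R.
Proof.
elim: j => [|j IHj]; first by rewrite big_ord0 bin0.
rewrite big_ord_recr /= IHj factS.
have -> : ('C(n, j.+1) * (j.+1 * j`!))%N = ((n - j) * 'C(n, j) * j`!)%N.
  by rewrite mulnA (mulnC _ j.+1) mul_bin_left.
have [le_jn | lt_nj] := leqP j n; first by rewrite !natrM natrB // mulrC mulrA.
by rewrite bin_small // !mul0n muln0 mul0r.
Qed.

Lemma binomPoly_horner_nat (j n : nat) : (binomPoly j).[n%:R] = 'C(n, j)%:R.
Proof.
rewrite /binomPoly hornerZ horner_prod.
under eq_bigr => i _ do rewrite hornerXsubC.
rewrite prod_natrB_bin natrM mulrC -mulrA mulfV ?mulr1 //.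
by rewrite pnatr_eq0 -lt0n fact_gt0.
Qed.

Definition moserCoef (k p : nat) : rat := (-1) ^+ p.-1 * p%:R ^+ k.-1.

Definition moserVal (k n s : nat) : rat :=
  \sum_(1 <= p < s.+1) moserCoef k p * 'C(n, s - p)%:R.

Lemma moserPoly_horner_nat (k s n : nat) :
  (moserPoly s k).[n%:R] = moserVal k n s.
Proof.
rewrite /moserPoly horner_sum; apply: eq_big_nat => p /andP [_ lt_ps].
by rewrite subzn // hornerZ /= binomPoly_horner_nat.
Qed.

Lemma moserVal_pascal (k n s : nat) :
  moserVal k n.+1 s.+1 = moserVal k n s.+1 + moserVal k n s.
Proof.
rewrite /moserVal big_nat_recr //= [X in _ = X + _]big_nat_recr //= subnn !bin0.
rewrite [RHS]addrAC -big_split /=; congr (_ + _).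
apply: eq_big_nat => p /andP [_ lt_ps].
by rewrite subSn // binS natrD mulrDr.
Qed.

Lemma moserVal0n (k s : nat) : (0 < s)%N -> moserVal k 0 s = moserCoef k s.
Proof.
case: s => // s _; rewrite /moserVal big_nat_recr //= subnn bin0 mulr1.
rewrite big1_seq ?add0r // => p /andP [_]; rewrite mem_index_iota => /andP [_ lt_ps].
by rewrite subSn // bin0n mulr0.
Qed.

Definition moser4Closed (n s : nat) : rat :=
  ((s.-1)`!%:R)^-1 * ((n%:R ^+ 2 - (6 * s%:R - 1) * n%:R + 6 * s%:R ^+ 2)
                      * \prod_(4 <= p < s.+1) (n%:R - p%:R)).

Lemma moser4Closed_pascal (n k : nat) :
  moser4Closed n.+1 k.+4 = moser4Closed n k.+4 + moser4Closed n k.+3.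
Proof.
rewrite /moser4Closed /= (big_nat_recl _ _ _ (_ : 4 <= k.+4)%N) //.
rewrite (big_nat_recr _ _ _ (_ : 4 <= k.+4)%N) //=.
rewrite (eq_bigr (fun p => (n%:R : rat) - p%:R)); last first.
  by move=> p _; rewrite -[p.+1%:R]natr1 -[n.+1%:R]natr1; ring.
set P := \prod_(_ <= _ < _) _.
have fact_neq0 : ((k.+2)`!%:R : rat) != 0 by rewrite pnatr_eq0 -lt0n fact_gt0.
have k3_neq0 : (k%:R + 1 + 1 + 1 : rat) != 0 by rewrite !natr1 pnatr_eq0.
rewrite factS natrM -!natr1; field.
by rewrite fact_neq0 k3_neq0.
Qed.

Lemma prod_opp_natr_from4 (k : nat) :
  6 * \prod_(4 <= p < k.+4) (0 - p%:R) = (-1) ^+ k.+2 * (k.+3)`!%:R :> rat.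
Proof.
elim: k => [|k IHk]; first by rewrite big_geq // mulr1 /= expr2 mulrN1 opprK mul1r.
rewrite big_nat_recr //= mulrA IHk [(k.+4)`!]factS natrM !exprS -!natr1; ring.
Qed.

Lemma moser4Closed0n (s : nat) : (3 <= s)%N -> moser4Closed 0 s = moserCoef 4 s.
Proof.
case: s => [|[|[|k]]] // _; rewrite /moser4Closed /moserCoef /=.
have := prod_opp_natr_from4 k; set P := \prod_(_ <= _ < _) _ => eP.
have -> : P = 6^-1 * ((-1) ^+ k.+2 * (k.+3)`!%:R).
  by rewrite -eP mulrA mulVf ?mul1r.
have fact_neq0 : ((k.+2)`!%:R : rat) != 0 by rewrite pnatr_eq0 -lt0n fact_gt0.
by rewrite [(k.+3)`!]factS natrM; field.
Qed.

Lemma moserVal4n3 (n : nat) : moserVal 4 n 3 = moser4Closed n 3.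
Proof.
have bin2E : 'C(n, 2)%:R = 2^-1 * ((n%:R : rat) * (n%:R - 1)).
  apply: (canRL (mulKf _)) => //; elim: n => [|n IHn]; first by rewrite mulr0 mul0r.
  by rewrite binS bin1 natrD mulrDr IHn -natr1; ring.
rewrite /moserVal /moser4Closed /moserCoef.
rewrite big_nat_recr //= big_nat_recr //= big_nat1 big_geq // bin1 bin0 bin2E.
by rewrite (_ : 2`! = 2)%N //; field.
Qed.

Lemma moserVal4E (n s : nat) : (3 <= s)%N -> moserVal 4 n s = moser4Closed n s.
Proof.
elim: n s => [|n IHn] s le3s.
  by rewrite moserVal0n ?moser4Closed0n // (leq_trans _ le3s).
case: s le3s => [|[|[|[|k]]]] // le3s; first exact: moserVal4n3.
by rewrite moserVal_pascal moser4Closed_pascal !IHn.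
Qed.

Theorem mainTheorem7 (s : nat) (hs : (3 <= s)%N) :
  moserPoly s 4 =
    ((s.-1)`!%:R)^-1 *:
      (('X ^+ 2 - (6 * s - 1)%:R *: 'X + (6 * s ^ 2)%:R%:P)
       * \prod_(4 <= p < s.+1) ('X - (p%:R)%:P)).
Proof.
apply: poly_eq_on_nat => n.
rewrite moserPoly_horner_nat moserVal4E // /moser4Closed.
rewrite hornerZ hornerM horner_prod !hornerE.
under [in RHS]eq_bigr do rewrite hornerXsubC.
rewrite natrB; last by rewrite muln_gt0; case: s hs.
by rewrite !natrM.
Qed.
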